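(* Let $d\geq 7$. There exists no smooth function $f:[0,\infty)\to\mathbb{R}$ solving $$f''(y)+\left(\frac{d-1}{y}-\frac{y}{2}\right)f'(y)-\frac{d-1}{2y^2}\sin(2f(y))=0\quad\text{for all } y>0$$ and satisfying both of the following conditions: (i) $f(0)=0$ and $f'(0)=a$ for some $a>0$; (ii) $\lim_{y\to\infty}f(y)=b$ for some $b\in\mathbb{R}$, and $\lim_{y\to\infty}y^3f'(y)=-(d-1)\sin(2b)$.
   Context: The equation is the ordinary differential equation for self-similar shrinking solutions $v(t,r)=f(r/\sqrt{-t})$, $t<0$, of the equivariant harmonic map heat flow $v_t=v_{rr}+\frac{d-1}{r}v_r-\frac{d-1}{2r^2}\sin(2v)$ from $\mathbb{R}^d$ to $S^d$. Here ''smooth'' means $f\in C^\infty([0,\infty))$. *)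

From Stdlib Require Import Reals.
Open Scope R_scope.

(* One-sided derivative on the half-line [0, oo):
   g has derivative l at x >= 0 within [0,oo), i.e.
   lim_{h -> 0, x + h >= 0, h <> 0} (g (x+h) - g x) / h = l.
   At x > 0 this is the ordinary derivative; at x = 0 it is the right derivative. *)
Definition halfline_deriv (g : R -> R) (x l : R) : Prop :=
  forall eps : R, 0 < eps ->
    exists delta : R, 0 < delta /\
      forall h : R, h <> 0 -> 0 <= x + h -> Rabs h < delta ->
        Rabs ((g (x + h) - g x) / h - l) < eps.

(* f in C^oo([0,oo)): there is a sequence of functions D n (D n = n-th
   derivative of f on [0,oo), one-sided at 0) with D 0 = f on [0,oo) and
   D (S n) the derivative of D n at every point of [0,oo). *)
Definition smooth_halfline (f : R -> R) : Prop :=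
  exists D : nat -> R -> R,
    (forall x, 0 <= x -> D O x = f x) /\
    (forall (n : nat) (x : R), 0 <= x -> halfline_deriv (D n) x (D (S n) x)).

Definition lim_at_infty (g : R -> R) (L : R) : Prop :=
  forall eps : R, 0 < eps ->
    exists M : R, forall y : R, M < y -> Rabs (g y - L) < eps.

(* Let k = d - 1 and rho(y) = y^k e^{-y^2/4}. For
   Q = ((3-k) y + y^3/2) f'^2 + (k/2) sin(2f) f', the equation turns the derivative
   of B = rho Q into a square plus rho f'^2 (k - 6 + k (1 + cos 2f)): B is
   nondecreasing when k >= 6, and strictly increasing near 0 since f(0) = 0 and
   f'(0) > 0. On the other hand B = O(y) at 0, and B -> 0 at infinity because
   y^3 f' = O(1) keeps Q bounded while rho -> 0; but a nondecreasing function
   vanishing at both ends is identically 0. *)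
From Stdlib Require Import Reals Lra.
From Coquelicot Require Import Coquelicot.
Open Scope R_scope.

Lemma is_derive_of_halfline_deriv (g : R -> R) x l :
  0 < x -> halfline_deriv g x l -> is_derive g x l.
Proof.
  intros Hx Hg. apply is_derive_Reals. intros eps Heps.
  destruct (Hg eps Heps) as (del & Hdel & Hquot).
  assert (Hmin : 0 < Rmin del x) by (apply Rmin_glb_lt; lra).
  exists (mkposreal _ Hmin). intros h Hh0 Hh. simpl in Hh.
  pose proof (Rmin_l del x). pose proof (Rmin_r del x).
  pose proof (Rle_abs (- h)) as Hnh. rewrite Rabs_Ropp in Hnh.
  apply Hquot; lra.
Qed.

Lemma halfline_deriv_right_continuous (g : R -> R) x l :
  0 <= x -> halfline_deriv g x l ->
  forall eps, 0 < eps ->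
    exists del, 0 < del /\ forall y, x < y < x + del -> Rabs (g y - g x) < eps.
Proof.
  intros Hx Hg eps Heps. destruct (Hg 1 Rlt_0_1) as (del1 & Hdel1 & Hquot).
  set (m := Rabs l + 1). assert (Hm : 0 < m) by (pose proof (Rabs_pos l); unfold m; lra).
  exists (Rmin del1 (eps / m)). split.
  { apply Rmin_glb_lt; [lra | apply Rdiv_lt_0_compat; lra]. }
  intros y Hy. pose proof (Rmin_l del1 (eps / m)). pose proof (Rmin_r del1 (eps / m)).
  set (h := y - x). set (q := (g (x + h) - g x) / h).
  assert (Hq : Rabs (q - l) < 1).
  { apply Hquot; unfold h; [intro; lra | lra | rewrite Rabs_right; lra]. }
  assert (Hqm : Rabs q < m).
  { pose proof (Rabs_triang (q - l) l). replace (q - l + l) with q in * by ring. unfold m; lra. }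
  replace (g y - g x) with (q * h) by (unfold q, h; replace (x + (y - x)) with y by ring; field; lra).
  rewrite Rabs_mult, (Rabs_right h) by (unfold h; lra).
  apply Rle_lt_trans with (m * h); [apply Rmult_le_compat_r; unfold h; lra |].
  apply Rlt_le_trans with (m * (eps / m)); [apply Rmult_lt_compat_l; unfold h; lra |].
  right; field; lra.
Qed.

Lemma is_derive_increment (g g' : R -> R) u v :
  u < v -> (forall x, u <= x <= v -> is_derive g x (g' x)) ->
  exists c, u <= c <= v /\ g v - g u = g' c * (v - u).
Proof.
  intros Huv Hg.
  destruct (MVT_gen g u v g') as (c & Hc & Hinc);
    rewrite ?Rmin_left, ?Rmax_right in * by lra.
  - intros x Hx. apply Hg. lra.
  - intros x Hx. apply derivable_continuous_pt. exists (g' x).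
    apply is_derive_Reals, Hg. lra.
  - exists c. auto.
Qed.

Lemma nondecreasing_vanishing_at_ends_eq0 (B : R -> R) :
  (forall u v, 0 < u -> u <= v -> B u <= B v) ->
  (forall eps, 0 < eps ->
     exists del, 0 < del /\ forall y, 0 < y < del -> Rabs (B y) <= eps) ->
  (forall eps, 0 < eps -> exists Y, forall y, Y < y -> Rabs (B y) <= eps) ->
  forall y, 0 < y -> B y = 0.
Proof.
  intros Hmono Hzero Hinfty y Hy. apply Rle_antisym.
  - apply Rle_plus_epsilon. intros eps Heps. destruct (Hinfty eps Heps) as [Y HY].
    set (z := Rmax Y y + 1). pose proof (Rmax_l Y y). pose proof (Rmax_r Y y).
    pose proof (HY z ltac:(unfold z; lra)) as Hz. apply Rabs_le_between in Hz.
    pose proof (Hmono y z Hy ltac:(unfold z; lra)). lra.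
  - apply Rle_plus_epsilon. intros eps Heps. destruct (Hzero eps Heps) as (del & Hdel & Hz).
    set (z := Rmin del y / 2). pose proof (Rmin_l del y). pose proof (Rmin_r del y).
    assert (0 < Rmin del y) by (apply Rmin_glb_lt; lra).
    pose proof (Hz z ltac:(unfold z; lra)) as Hbz. apply Rabs_le_between in Hbz.
    pose proof (Hmono z y ltac:(unfold z; lra) ltac:(unfold z; lra)). lra.
Qed.

Definition gauss_weight (k y : R) : R := exp (k * ln y - y * y / 4).

Lemma gauss_weight_pos k y : 0 < gauss_weight k y.
Proof. apply exp_pos. Qed.

Lemma is_derive_gauss_weight k y :
  0 < y -> is_derive (gauss_weight k) y (gauss_weight k y * (k / y - y / 2)).
Proof.
  intros Hy. unfold gauss_weight. auto_derive; [exact Hy |].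
  replace (k * ln y + - (y * y * / 4)) with (k * ln y - y * y / 4) by (unfold Rdiv; ring).
  field. lra.
Qed.

Lemma exp_le_exp x y : x <= y -> exp x <= exp y.
Proof. intros [Hlt | ->]; [left; apply exp_increasing; exact Hlt | right; reflexivity]. Qed.

Lemma gauss_weight_le_id k y : 1 <= k -> 0 < y <= 1 -> gauss_weight k y <= y.
Proof.
  intros Hk Hy. unfold gauss_weight.
  apply Rle_trans with (exp (ln y)); [apply exp_le_exp | rewrite exp_ln; lra].
  assert (Hln : ln y <= 0) by (rewrite <- ln_1; apply ln_le; lra).
  nra.
Qed.

Lemma gauss_weight_vanishes k t :
  0 <= k -> 0 < t -> exists Y, forall y, Y < y -> gauss_weight k y <= t.
Proof.
  intros Hk Ht. exists (Rmax 1 (Rmax (4 * k + 4) (Rabs (ln t)))). intros y Hy.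
  pose proof (Rmax_l 1 (Rmax (4 * k + 4) (Rabs (ln t)))).
  pose proof (Rmax_r 1 (Rmax (4 * k + 4) (Rabs (ln t)))).
  pose proof (Rmax_l (4 * k + 4) (Rabs (ln t))). pose proof (Rmax_r (4 * k + 4) (Rabs (ln t))).
  unfold gauss_weight. rewrite <- (exp_ln t) by lra. apply exp_le_exp.
  assert (Hln : ln y < y).
  { pose proof (exp_ineq1 y ltac:(lra)).
    rewrite <- (ln_exp y) at 2. apply ln_increasing; lra. }
  assert (k * ln y <= k * y) by (apply Rmult_le_compat_l; lra).
  pose proof (Rle_abs (- ln t)) as Hlnt. rewrite Rabs_Ropp in Hlnt.
  nra.
Qed.

Lemma is_derive_Rmult (g h : R -> R) x dg dh :
  is_derive g x dg -> is_derive h x dh ->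
  is_derive (fun t => g t * h t) x (dg * h x + g x * dh).
Proof. intros Dg Dh. apply (is_derive_mult g h); auto. intros; apply Rmult_comm. Qed.

Lemma is_derive_sin_comp (g : R -> R) x dg :
  is_derive g x dg -> is_derive (fun t => sin (g t)) x (dg * cos (g x)).
Proof. intros Dg. apply (is_derive_comp sin g); [apply is_derive_sin | exact Dg]. Qed.

Section SelfSimilarEquation.

Variables (k : R) (f f1 f2 : R -> R).
Hypothesis k_ge_6 : 6 <= k.
Hypothesis f_deriv : forall y, 0 < y -> is_derive f y (f1 y).
Hypothesis f1_deriv : forall y, 0 < y -> is_derive f1 y (f2 y).
Hypothesis equation : forall y, 0 < y ->
  f2 y + (k / y - y / 2) * f1 y - k / (2 * y ^ 2) * sin (2 * f y) = 0.

Definition energy (y : R) : R :=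
  ((3 - k) * y + y ^ 3 / 2) * (f1 y * f1 y) + k / 2 * (sin (2 * f y) * f1 y).

Definition lyapunov (y : R) : R := gauss_weight k y * energy y.

Definition lyapunov_rate (y : R) : R :=
  gauss_weight k y *
    (((3 - k + y ^ 2 / 2) * f1 y + k * sin (2 * f y) / (2 * y)) ^ 2
     + f1 y ^ 2 * (k - 6 + k * (1 + cos (2 * f y)))).

Lemma is_derive_lyapunov y : 0 < y -> is_derive lyapunov y (lyapunov_rate y).
Proof.
  intros Hy. pose proof (f_deriv y Hy) as Df. pose proof (f1_deriv y Hy) as Df1.
  assert (Dpoly : is_derive (fun t => (3 - k) * t + t ^ 3 / 2) y ((3 - k) + 3 * y ^ 2 / 2))
    by (auto_derive; [exact I | field]).
  assert (Dsin : is_derive (fun t => sin (2 * f t)) y (2 * f1 y * cos (2 * f y)))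
    by (apply (is_derive_sin_comp (fun t => 2 * f t)), is_derive_scal, Df).
  pose proof (is_derive_Rmult _ _ _ _ _ Dpoly (is_derive_Rmult _ _ _ _ _ Df1 Df1)) as Dquad.
  pose proof (is_derive_scal _ _ (k / 2) _ (is_derive_Rmult _ _ _ _ _ Dsin Df1)) as Dlin.
  pose proof (is_derive_Rmult _ _ _ _ _
    (is_derive_gauss_weight k y Hy) (is_derive_plus _ _ _ _ _ Dquad Dlin)) as Dlyap.
  apply (eq_ind _ (is_derive lyapunov y) Dlyap).
  assert (Hf2 : f2 y = k / (2 * y ^ 2) * sin (2 * f y) - (k / y - y / 2) * f1 y)
    by (pose proof (equation y Hy); lra).
  unfold energy, lyapunov_rate. rewrite Hf2.
  unfold plus; simpl. field. lra.
Qed.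

Lemma lyapunov_rate_nonneg y : 0 <= lyapunov_rate y.
Proof.
  unfold lyapunov_rate. apply Rmult_le_pos; [left; apply gauss_weight_pos |].
  pose proof (COS_bound (2 * f y)).
  assert (0 <= k - 6 + k * (1 + cos (2 * f y))) by nra.
  apply Rplus_le_le_0_compat; [apply pow2_ge_0 | apply Rmult_le_pos; [apply pow2_ge_0 | lra]].
Qed.

Lemma lyapunov_rate_pos y :
  f1 y <> 0 -> -1 < cos (2 * f y) -> 0 < lyapunov_rate y.
Proof.
  intros Hf1 Hcos. unfold lyapunov_rate. apply Rmult_lt_0_compat; [apply gauss_weight_pos |].
  assert (0 < f1 y ^ 2) by (apply pow2_gt_0; exact Hf1).
  assert (0 < k - 6 + k * (1 + cos (2 * f y))) by nra.
  pose proof (pow2_ge_0 ((3 - k + y ^ 2 / 2) * f1 y + k * sin (2 * f y) / (2 * y))).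
  pose proof (Rmult_lt_0_compat (f1 y ^ 2) (k - 6 + k * (1 + cos (2 * f y)))).
  lra.
Qed.

Lemma lyapunov_nondecreasing u v : 0 < u -> u <= v -> lyapunov u <= lyapunov v.
Proof.
  intros Hu Huv. destruct (Req_dec u v) as [<- | Hne]; [lra |].
  destruct (is_derive_increment lyapunov lyapunov_rate u v) as (c & Hc & Hinc); [lra | |].
  - intros x Hx. apply is_derive_lyapunov. lra.
  - pose proof (lyapunov_rate_nonneg c). nra.
Qed.

Lemma lyapunov_increasing u v :
  0 < u < v -> (forall y, u <= y <= v -> f1 y <> 0 /\ -1 < cos (2 * f y)) ->
  lyapunov u < lyapunov v.
Proof.
  intros Huv Hrate.
  destruct (is_derive_increment lyapunov lyapunov_rate u v) as (c & Hc & Hinc); [lra | |].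
  - intros x Hx. apply is_derive_lyapunov. lra.
  - destruct (Hrate c Hc) as [Hf1 Hcos]. pose proof (lyapunov_rate_pos c Hf1 Hcos). nra.
Qed.

Definition energy_bound (A : R) : R := (Rabs (3 - k) + 1) * A ^ 2 + k / 2 * A.

Lemma abs_energy_le y : 0 < y ->
  Rabs (energy y) <= (Rabs (3 - k) * y + y ^ 3 / 2) * f1 y ^ 2 + k / 2 * Rabs (f1 y).
Proof.
  intros Hy. unfold energy.
  eapply Rle_trans; [apply Rabs_triang |].
  rewrite !Rabs_mult, (Rabs_right (k / 2)) by lra.
  assert (Hpoly : Rabs ((3 - k) * y + y ^ 3 / 2) <= Rabs (3 - k) * y + y ^ 3 / 2).
  { eapply Rle_trans; [apply Rabs_triang |].
    pose proof (pow_lt y 3 Hy).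
    rewrite Rabs_mult, (Rabs_right y), (Rabs_right (y ^ 3 / 2)) by lra.
    lra. }
  assert (Hsq : Rabs (f1 y) * Rabs (f1 y) = f1 y ^ 2) by (rewrite <- Rabs_mult, Rabs_right; nra).
  assert (Rabs (sin (2 * f y)) <= 1) by (apply Rabs_le, SIN_bound).
  pose proof (Rabs_pos (f1 y)).
  rewrite Hsq. apply Rplus_le_compat.
  - apply Rmult_le_compat_r; [apply pow2_ge_0 | exact Hpoly].
  - apply Rmult_le_compat_l; [lra | nra].
Qed.

Lemma abs_energy_le_near_0 y A :
  0 < y <= 1 -> Rabs (f1 y) <= A -> Rabs (energy y) <= energy_bound A.
Proof.
  intros Hy HA. eapply Rle_trans; [apply abs_energy_le; lra |]. unfold energy_bound.
  pose proof (Rabs_pos (f1 y)). pose proof (Rabs_pos (3 - k)).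
  assert (Hy3 : 0 < y ^ 3 <= 1) by (split; [apply pow_lt | rewrite <- (pow1 3); apply pow_incr]; lra).
  assert (Hsq : f1 y ^ 2 <= A ^ 2) by (rewrite <- (pow2_abs (f1 y)); apply pow_incr; lra).
  assert (Rabs (3 - k) * y + y ^ 3 / 2 <= Rabs (3 - k) + 1) by nra.
  apply Rplus_le_compat; [apply Rmult_le_compat; nra | apply Rmult_le_compat_l; lra].
Qed.

Lemma abs_energy_le_near_infty y A :
  1 <= y -> Rabs (y ^ 3 * f1 y) <= A -> Rabs (energy y) <= energy_bound A.
Proof.
  intros Hy HA. eapply Rle_trans; [apply abs_energy_le; lra |]. unfold energy_bound.
  pose proof (Rabs_pos (f1 y)). pose proof (Rabs_pos (3 - k)).
  assert (Hy3 : 1 <= y ^ 3) by (rewrite <- (pow1 3); apply pow_incr; lra).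
  rewrite Rabs_mult, (Rabs_right (y ^ 3)) in HA by lra.
  assert (Hsq : (y ^ 3) ^ 2 * f1 y ^ 2 <= A ^ 2).
  { rewrite <- Rpow_mult_distr, <- (pow2_abs (y ^ 3 * f1 y)), Rabs_mult, (Rabs_right (y ^ 3)) by lra.
    apply pow_incr. nra. }
  assert (Hy6 : y <= (y ^ 3) ^ 2 /\ y ^ 3 <= (y ^ 3) ^ 2) by (simpl; split; nra).
  assert (Rabs (3 - k) * y + y ^ 3 / 2 <= (Rabs (3 - k) + 1) * (y ^ 3) ^ 2) by nra.
  apply Rplus_le_compat; [| apply Rmult_le_compat_l; nra].
  apply Rle_trans with ((Rabs (3 - k) + 1) * ((y ^ 3) ^ 2 * f1 y ^ 2));
    [| apply Rmult_le_compat_l; lra].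
  rewrite <- Rmult_assoc. apply Rmult_le_compat_r; [apply pow2_ge_0 | lra].
Qed.

Lemma abs_lyapunov y : Rabs (lyapunov y) = gauss_weight k y * Rabs (energy y).
Proof. unfold lyapunov. rewrite Rabs_mult, Rabs_right; [reflexivity | left; apply gauss_weight_pos]. Qed.

Lemma lyapunov_vanishes_at_0 A del0 :
  0 < del0 -> (forall y, 0 < y < del0 -> Rabs (f1 y) <= A) ->
  forall eps, 0 < eps ->
    exists del, 0 < del /\ forall y, 0 < y < del -> Rabs (lyapunov y) <= eps.
Proof.
  intros Hdel0 HA eps Heps. set (P := Rabs (energy_bound A) + 1).
  assert (HP : 0 < P) by (pose proof (Rabs_pos (energy_bound A)); unfold P; lra).
  exists (Rmin del0 (Rmin 1 (eps / P))). split.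
  { repeat apply Rmin_glb_lt; try apply Rdiv_lt_0_compat; lra. }
  intros y Hy. pose proof (Rmin_l del0 (Rmin 1 (eps / P))). pose proof (Rmin_r del0 (Rmin 1 (eps / P))).
  pose proof (Rmin_l 1 (eps / P)). pose proof (Rmin_r 1 (eps / P)).
  assert (HE : Rabs (energy y) <= P).
  { pose proof (Rle_abs (energy_bound A)). unfold P.
    pose proof (abs_energy_le_near_0 y A ltac:(lra) (HA y ltac:(lra))). lra. }
  assert (Hw : gauss_weight k y <= y) by (apply gauss_weight_le_id; lra).
  pose proof (gauss_weight_pos k y). pose proof (Rabs_pos (energy y)).
  rewrite abs_lyapunov.
  apply Rle_trans with (eps / P * P); [apply Rmult_le_compat; lra | right; field; lra].
Qed.

Lemma lyapunov_vanishes_at_infty A Y0 :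
  (forall y, Y0 < y -> Rabs (y ^ 3 * f1 y) <= A) ->
  forall eps, 0 < eps -> exists Y, forall y, Y < y -> Rabs (lyapunov y) <= eps.
Proof.
  intros HA eps Heps. set (P := Rabs (energy_bound A) + 1).
  assert (HP : 0 < P) by (pose proof (Rabs_pos (energy_bound A)); unfold P; lra).
  destruct (gauss_weight_vanishes k (eps / P)) as [Y1 HY1];
    [lra | apply Rdiv_lt_0_compat; lra |].
  exists (Rmax Y0 (Rmax 1 Y1)). intros y Hy.
  pose proof (Rmax_l Y0 (Rmax 1 Y1)). pose proof (Rmax_r Y0 (Rmax 1 Y1)).
  pose proof (Rmax_l 1 Y1). pose proof (Rmax_r 1 Y1).
  assert (HE : Rabs (energy y) <= P).
  { pose proof (Rle_abs (energy_bound A)). unfold P.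
    pose proof (abs_energy_le_near_infty y A ltac:(lra) (HA y ltac:(lra))). lra. }
  pose proof (HY1 y ltac:(lra)). pose proof (gauss_weight_pos k y). pose proof (Rabs_pos (energy y)).
  rewrite abs_lyapunov.
  apply Rle_trans with (eps / P * P); [apply Rmult_le_compat; lra | right; field; lra].
Qed.

End SelfSimilarEquation.

Lemma cos_double_gt_m1 x : -1 < x < 1 -> -1 < cos (2 * x).
Proof.
  intros Hx. pose proof PI2_1.
  assert (0 < cos x) by (apply cos_gt_0; lra).
  rewrite cos_2a_cos. nra.
Qed.

Theorem theorem1 (d : nat) (Hd : (7 <= d)%nat) :
  ~ exists (f f1 f2 : R -> R),
      smooth_halfline f /\
      (forall y, 0 <= y -> halfline_deriv f y (f1 y)) /\
      (forall y, 0 <= y -> halfline_deriv f1 y (f2 y)) /\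
      (forall y, 0 < y ->
         f2 y + ((INR d - 1) / y - y / 2) * f1 y
           - (INR d - 1) / (2 * y ^ 2) * sin (2 * f y) = 0) /\
      f 0 = 0 /\
      (exists a : R, 0 < a /\ f1 0 = a) /\
      (exists b : R, lim_at_infty f b /\
         lim_at_infty (fun y => y ^ 3 * f1 y) (- (INR d - 1) * sin (2 * b))).
Proof.
  intros (f & f1 & f2 & _ & Hf & Hf1 & Hode & Hf0 & (a & Ha & Hf1_0) & b & _ & Hlim).
  set (k := INR d - 1) in *.
  assert (Hk : 6 <= k) by (apply le_INR in Hd; simpl in Hd; unfold k; lra).
  assert (Df : forall y, 0 < y -> is_derive f y (f1 y))
    by (intros y Hy; apply is_derive_of_halfline_deriv, Hf; lra).
  assert (Df1 : forall y, 0 < y -> is_derive f1 y (f2 y))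
    by (intros y Hy; apply is_derive_of_halfline_deriv, Hf1; lra).
  destruct (halfline_deriv_right_continuous f1 0 (f2 0) (Rle_refl 0) (Hf1 0 (Rle_refl 0)) (a / 2))
    as (del1 & Hdel1 & Hnear1); [lra |].
  destruct (halfline_deriv_right_continuous f 0 (f1 0) (Rle_refl 0) (Hf 0 (Rle_refl 0)) 1 Rlt_0_1)
    as (del2 & Hdel2 & Hnear2).
  set (del := Rmin del1 del2).
  assert (Hdel : 0 < del) by (apply Rmin_glb_lt; lra).
  assert (Hnear : forall y, 0 < y < del -> a / 2 < f1 y < 3 * a / 2 /\ -1 < f y < 1).
  { intros y Hy. pose proof (Rmin_l del1 del2). pose proof (Rmin_r del1 del2).
    destruct (Rabs_def2 _ _ (Hnear1 y ltac:(unfold del in Hy; lra))).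
    destruct (Rabs_def2 _ _ (Hnear2 y ltac:(unfold del in Hy; lra))). lra. }
  destruct (Hlim 1 Rlt_0_1) as [Y0 HY0].
  assert (Hzero : forall y, 0 < y -> lyapunov k f f1 y = 0).
  { apply nondecreasing_vanishing_at_ends_eq0.
    - exact (lyapunov_nondecreasing k f f1 f2 Hk Df Df1 Hode).
    - apply (lyapunov_vanishes_at_0 k f f1 Hk (3 * a / 2) del Hdel).
      intros y Hy. destruct (Hnear y Hy). rewrite Rabs_right; lra.
    - apply (lyapunov_vanishes_at_infty k f f1 Hk (Rabs (- k * sin (2 * b)) + 1) Y0).
      intros y Hy. pose proof (Rabs_triang_inv (y ^ 3 * f1 y) (- k * sin (2 * b))).
      pose proof (HY0 y Hy). lra. }
  assert (Hinc : lyapunov k f f1 (del / 4) < lyapunov k f f1 (del / 2)).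
  { apply (lyapunov_increasing k f f1 f2 Hk Df Df1 Hode); [lra |].
    intros y Hy. destruct (Hnear y ltac:(lra)).
    split; [intro; lra | apply cos_double_gt_m1; lra]. }
  rewrite !Hzero in Hinc by lra. lra.
Qed.
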